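(* Let $V=H^0(\mathbb{P}^2,T_{\mathbb{P}^2})$ (an $8$-dimensional complex vector space) and let $\mathcal{S}\subset V^4$ be the set of ordered $4$-tuples $S=(w_1,\dots,w_4)$ of linearly independent sections generating $T_{\mathbb{P}^2}$ at every point; $\mathcal{S}$ is a nonempty Zariski open subset of $V^4$. Then there is a nonempty Zariski open subset $U\subset\mathcal{S}$ such that for every $S\in U$ the morphism $\phi_S:\mathbb{P}^2\to\mathrm{Gr}(2,\mathbb{C}^4)$ is generically injective (birational onto its image).
   Context: Work over $\mathbb{C}$. $T_{\mathbb{P}^2}$ is the tangent bundle of $\mathbb{P}^2$. $\mathrm{Gr}(2,\mathbb{C}^4)$ is the Grassmannian of $2$-dimensional quotients of $\mathbb{C}^4$, with universal quotient bundle $\mathcal{O}^4\to Q\to 0$. For an ordered $4$-tuple $S=(w_1,\dots,w_4)$ of global sections of $T_{\mathbb{P}^2}$ generating $T_{\mathbb{P}^2}$ at every point, $\phi_S:\mathbb{P}^2\to\mathrm{Gr}(2,\mathbb{C}^4)$ is the morphism sending $x$ to the quotient $\mathbb{C}^4=\mathcal{O}^4_{\mathbb{P}^2}|_x\to T_{\mathbb{P}^2}|_x$ induced by $(a_1,\dots,a_4)\mapsto\sum a_iw_i(x)$; thus $\phi_S^*Q\cong T_{\mathbb{P}^2}$. *)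

From HB Require Import structures.
From mathcomp Require Import all_boot all_order all_algebra.
Set Implicit Arguments. Unset Strict Implicit. Unset Printing Implicit Defensive.
Import GRing.Theory.
Local Open Scope ring_scope.

Inductive mpoly (I : Type) (R : Type) : Type :=
| MConst of R
| MVar of I
| MAdd of mpoly I R & mpoly I R
| MMul of mpoly I R & mpoly I R.

Fixpoint meval (I : Type) (R : nzRingType) (v : I -> R) (p : mpoly I R) : R :=
  match p with
  | MConst c => c
  | MVar i => v i
  | MAdd p q => meval v p + meval v q
  | MMul p q => meval v p * meval v q
  end.

Definition zariski_open_in (I : Type) (R : nzRingType)
    (X U : (I -> R) -> Prop) : Prop :=
  (forall v, U v -> X v) /\
  exists fs : seq (mpoly I R),
    forall v, X v -> (U v <-> has (fun f => meval v f != 0) fs).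

(* A global vector field on P^2 is represented by a traceless 3x3 matrix A
   (H^0(T_P2) = gl_3 / <I> = sl_3 via the Euler sequence); its value at the
   point [x] (x a nonzero row vector) is the class of x *m A in C^3/<x>. *)
Definition V4 (R : nzRingType) (S : 'I_4 -> 'M[R]_3) : Prop :=
  forall i, \tr (S i) = 0.

Definition coords4 (R : nzRingType) (S : 'I_4 -> 'M[R]_3)
  : ('I_4 * 'I_3 * 'I_3) -> R := fun ijk => S ijk.1.1 ijk.1.2 ijk.2.

Definition zariski_open_V4 (R : nzRingType) (U : ('I_4 -> 'M[R]_3) -> Prop)
  : Prop :=
  (forall S, U S -> V4 S) /\
  exists fs : seq (mpoly ('I_4 * 'I_3 * 'I_3) R),
    forall S, V4 S -> (U S <-> has (fun f => meval (coords4 S) f != 0) fs).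

(* rows: representatives of w_i(x) in C^3 *)
Definition secmx (R : nzRingType) (S : 'I_4 -> 'M[R]_3) (x : 'rV[R]_3)
  : 'M[R]_(4, 3) := \matrix_(i < 4) (x *m S i).

(* w_1,...,w_4 generate T_P2 at [x]: the w_i(x) together with x span C^3 *)
Definition generates (R : fieldType) (S : 'I_4 -> 'M[R]_3) : Prop :=
  forall x : 'rV[R]_3, x != 0 -> row_full (col_mx (secmx S x) x).

Definition lin_indep (R : fieldType) (S : 'I_4 -> 'M[R]_3) : Prop :=
  row_free (\matrix_(i < 4) mxvec (S i)).

Definition admissible (R : fieldType) (S : 'I_4 -> 'M[R]_3) : Prop :=
  [/\ V4 S, lin_indep S & generates S].

(* phi_S(x) = phi_S(y): the quotients C^4 -> T_x, C^4 -> T_y,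
   (a_i) |-> sum a_i w_i, have the same kernel. *)
Definition phi_eq (R : fieldType) (S : 'I_4 -> 'M[R]_3) (x y : 'rV[R]_3)
  : Prop :=
  forall a : 'rV[R]_4,
    ((a *m secmx S x) <= x)%MS = ((a *m secmx S y) <= y)%MS.

Definition rcoords (R : nzRingType) (x : 'rV[R]_3) : 'I_3 -> R :=
  fun i => x ord0 i.

Definition homogeneous (R : nzRingType) (f : mpoly 'I_3 R) : Prop :=
  exists d : nat, forall (c : R) (x : 'rV[R]_3),
    meval (rcoords (c *: x)) f = c ^+ d * meval (rcoords x) f.

(* W (a set of nonzero vectors, i.e. a cone over a subset of P^2) is a
   Zariski open subset of P^2: the non-common-vanishing locus of finitely
   many homogeneous polynomials. *)
Definition zariski_open_P2 (R : nzRingType) (W : 'rV[R]_3 -> Prop) : Prop :=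
  exists fs : seq (mpoly 'I_3 R),
    (forall k, (k < size fs)%N -> homogeneous (nth (MConst _ 0) fs k)) /\
    forall x, W x <-> (x != 0 /\ has (fun f => meval (rcoords x) f != 0) fs).

Definition generically_injective (R : fieldType) (S : 'I_4 -> 'M[R]_3)
  : Prop :=
  exists W : 'rV[R]_3 -> Prop,
    [/\ zariski_open_P2 W, (exists x, W x) &
        forall x y, W x -> y != 0 -> phi_eq S x y -> (y <= x)%MS].

(* The open set U is cut out by the product of three polynomials in S, all
   equal to -1 at an explicit witness S0:
   - the ten 3x3 minors of x, xS_1, ..., xS_4 are cubic forms in x, namely the
     image of the ten cubic monomials of x under a 10x10 matrix depending on S;
     when it is invertible these minors never vanish together, so S generates;
   - a 4x4 minor of the coefficients of S gives linear independence;
   - x is linearly dependent on any three of the xS_i, so some combination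
     P(x) = sum a_i S_i has x as an eigenvector: the row a lies in the kernel
     of the quotient C^4 -> T at x, hence at every y of the fibre of x, and y
     is an eigenvector of P(x) as well. With a second such Q(x), both x and y
     lie in the left kernel of [P(x), Q(x)], which is the line through x as
     soon as a 2x2 minor g(x) of it is nonzero. As g is homogeneous in x and
     U requires g(e0) != 0 at a fixed point e0, phi_S is injective on the
     nonempty open set {g != 0}. *)

From HB Require Import structures.
From mathcomp Require Import all_boot all_order all_algebra.
From mathcomp Require Import ring.
Set Implicit Arguments. Unset Strict Implicit. Unset Printing Implicit Defensive.
Import GRing.Theory.
Local Open Scope ring_scope.

Definition o0 : 'I_3 := @Ordinal 3 0 isT.
Definition o1 : 'I_3 := @Ordinal 3 1 isT.
Definition o2 : 'I_3 := @Ordinal 3 2 isT.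

Lemma ord3P (P : 'I_3 -> Prop) : P o0 -> P o1 -> P o2 -> forall i, P i.
Proof. by move=> ? ? ? [[|[|[|//]]] Hi]; rewrite (bool_irrelevance Hi isT). Qed.

Lemma big_ord3 (R : Type) (idx : R) (op : Monoid.law idx) (F : 'I_3 -> R) :
  \big[op/idx]_(i < 3) F i = op (op (F o0) (F o1)) (F o2).
Proof.
rewrite !big_ord_recl big_ord0 Monoid.mulm1 Monoid.mulmA.
by congr (op (op (F _) (F _)) (F _)); apply: val_inj.
Qed.

Definition p0 : 'I_4 := @Ordinal 4 0 isT.
Definition p1 : 'I_4 := @Ordinal 4 1 isT.
Definition p2 : 'I_4 := @Ordinal 4 2 isT.
Definition p3 : 'I_4 := @Ordinal 4 3 isT.

Lemma ord4P (P : 'I_4 -> Prop) : P p0 -> P p1 -> P p2 -> P p3 -> forall i, P i.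
Proof. by move=> ? ? ? ? [[|[|[|[|//]]]] Hi]; rewrite (bool_irrelevance Hi isT). Qed.

Lemma big_ord4 (R : Type) (idx : R) (op : Monoid.law idx) (F : 'I_4 -> R) :
  \big[op/idx]_(i < 4) F i = op (op (op (F p0) (F p1)) (F p2)) (F p3).
Proof.
rewrite !big_ord_recl big_ord0 Monoid.mulm1 !Monoid.mulmA.
by congr (op (op (op (F _) (F _)) (F _)) (F _)); apply: val_inj.
Qed.

Notation O10 k := (@Ordinal 10 k isT).

Lemma ord10P (P : 'I_10 -> Prop) :
  P (O10 0) -> P (O10 1) -> P (O10 2) -> P (O10 3) -> P (O10 4) ->
  P (O10 5) -> P (O10 6) -> P (O10 7) -> P (O10 8) -> P (O10 9) -> forall i, P i.
Proof.
by move=> ? ? ? ? ? ? ? ? ? ? [[|[|[|[|[|[|[|[|[|[|//]]]]]]]]]] Hi];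
  rewrite (bool_irrelevance Hi isT).
Qed.

Lemma big_ord10 (R : Type) (idx : R) (op : Monoid.law idx) (F : 'I_10 -> R) :
  \big[op/idx]_(i < 10) F i =
  op (op (op (op (op (op (op (op (op (F (O10 0)) (F (O10 1))) (F (O10 2)))
    (F (O10 3))) (F (O10 4))) (F (O10 5))) (F (O10 6))) (F (O10 7)))
    (F (O10 8))) (F (O10 9)).
Proof.
rewrite !big_ord_recl big_ord0 Monoid.mulm1 !Monoid.mulmA.
by congr (op (op (op (op (op (op (op (op (op (F _) (F _)) (F _)) (F _)) (F _))
  (F _)) (F _)) (F _)) (F _)) (F _)); apply: val_inj.
Qed.

Section PolynomialFunctions.
Variables (T I : Type) (R : comNzRingType) (env : T -> I -> R).

Definition polyfun (F : T -> R) := exists p : mpoly I R, forall t, meval (env t) p = F t.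

Lemma polyfun_const c : polyfun (fun=> c).
Proof. by exists (MConst I c). Qed.

Lemma polyfun_var i : polyfun (fun t => env t i).
Proof. by exists (MVar R i). Qed.

Lemma eq_polyfun F G : F =1 G -> polyfun G -> polyfun F.
Proof. by move=> eFG [p hp]; exists p => t; rewrite hp eFG. Qed.

Lemma polyfun_add F G : polyfun F -> polyfun G -> polyfun (fun t => F t + G t).
Proof. by move=> [p hp] [q hq]; exists (MAdd p q) => t /=; rewrite hp hq. Qed.

Lemma polyfun_mul F G : polyfun F -> polyfun G -> polyfun (fun t => F t * G t).
Proof. by move=> [p hp] [q hq]; exists (MMul p q) => t /=; rewrite hp hq. Qed.

Lemma polyfun_opp F : polyfun F -> polyfun (fun t => - F t).
Proof.
move=> hF; apply: (eq_polyfun (G := fun t => -1 * F t)).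
  by move=> t; rewrite mulN1r.
by apply: polyfun_mul => //; apply: polyfun_const.
Qed.

Lemma polyfun_sub F G : polyfun F -> polyfun G -> polyfun (fun t => F t - G t).
Proof. by move=> hF hG; apply/polyfun_add/polyfun_opp. Qed.

Lemma polyfun_big (idx : R) (op : R -> R -> R) (J : Type) (r : seq J)
    (P : pred J) (F : J -> T -> R) :
  (forall G H, polyfun G -> polyfun H -> polyfun (fun t => op (G t) (H t))) ->
  (forall j, polyfun (F j)) -> polyfun (fun t => \big[op/idx]_(j <- r | P j) F j t).
Proof.
move=> hop hF; elim: r => [|j r IH].
  apply: (eq_polyfun (G := fun=> idx)) => [t|]; first by rewrite big_nil.
  exact: polyfun_const.
apply: (eq_polyfun (G := fun t =>
  if P j then op (F j t) (\big[op/idx]_(j <- r | P j) F j t)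
  else \big[op/idx]_(j <- r | P j) F j t)).
  by move=> t; rewrite big_cons.
by case: (P j) => //; apply: hop.
Qed.

Definition polyfun_mx m n (F : T -> 'M[R]_(m, n)) :=
  forall i j, polyfun (fun t => F t i j).

Lemma polyfun_mx_const m n (A : 'M[R]_(m, n)) : polyfun_mx (fun=> A).
Proof. by move=> i j; apply: polyfun_const. Qed.

Lemma polyfun_mx_sub m n (F G : T -> 'M[R]_(m, n)) :
  polyfun_mx F -> polyfun_mx G -> polyfun_mx (fun t => F t - G t).
Proof.
move=> hF hG i j; apply: (eq_polyfun (G := fun t => F t i j - G t i j)).
  by move=> t; rewrite !mxE.
exact: polyfun_sub.
Qed.

Lemma polyfun_mx_add m n (F G : T -> 'M[R]_(m, n)) :
  polyfun_mx F -> polyfun_mx G -> polyfun_mx (fun t => F t + G t).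
Proof.
move=> hF hG i j; apply: (eq_polyfun (G := fun t => F t i j + G t i j)).
  by move=> t; rewrite !mxE.
exact: polyfun_add.
Qed.

Lemma polyfun_mx_scale m n (c : T -> R) (F : T -> 'M[R]_(m, n)) :
  polyfun c -> polyfun_mx F -> polyfun_mx (fun t => c t *: F t).
Proof.
move=> hc hF i j; apply: (eq_polyfun (G := fun t => c t * F t i j)).
  by move=> t; rewrite mxE.
exact: polyfun_mul.
Qed.

Lemma polyfun_mx_mul m n p (F : T -> 'M[R]_(m, n)) (G : T -> 'M[R]_(n, p)) :
  polyfun_mx F -> polyfun_mx G -> polyfun_mx (fun t => F t *m G t).
Proof.
move=> hF hG i j.
apply: (eq_polyfun (G := fun t => \sum_(k <- index_enum 'I_n | true) F t i k * G t k j)).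
  by move=> t; rewrite mxE.
by apply: polyfun_big => [|k]; [apply: polyfun_add | apply: polyfun_mul].
Qed.

Lemma polyfun_mx_row m n (A : T -> 'M[R]_(m, n)) p :
  polyfun_mx A -> polyfun_mx (fun t => row p (A t)).
Proof.
by move=> hA i j; apply: (eq_polyfun (G := fun t => A t p j)) => [t|]; rewrite ?mxE.
Qed.

Lemma polyfun_det n (F : T -> 'M[R]_n) : polyfun_mx F -> polyfun (fun t => \det (F t)).
Proof.
move=> hF; apply: polyfun_big => [|s]; first exact: polyfun_add.
apply: polyfun_mul; first exact: polyfun_const.
by apply: polyfun_big => [|i]; [apply: polyfun_mul | apply: hF].
Qed.

End PolynomialFunctions.

Section Dimension3.
Variable R : comNzRingType.
Implicit Types (u v w x : 'rV[R]_3) (C : 'M[R]_3).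

Definition det3 u v w : R :=
  u ord0 o0 * (v ord0 o1 * w ord0 o2 - v ord0 o2 * w ord0 o1)
  - u ord0 o1 * (v ord0 o0 * w ord0 o2 - v ord0 o2 * w ord0 o0)
  + u ord0 o2 * (v ord0 o0 * w ord0 o1 - v ord0 o1 * w ord0 o0).

Definition cross u v : 'rV[R]_3 :=
  \row_j [:: u ord0 o1 * v ord0 o2 - u ord0 o2 * v ord0 o1;
             u ord0 o2 * v ord0 o0 - u ord0 o0 * v ord0 o2;
             u ord0 o0 * v ord0 o1 - u ord0 o1 * v ord0 o0]`_j.

Lemma mulmx_rV3 x C j :
  (x *m C) ord0 j = x ord0 o0 * C o0 j + x ord0 o1 * C o1 j + x ord0 o2 * C o2 j.
Proof. by rewrite mxE big_ord3. Qed.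

Lemma det3_scale_col u v w (c : 'cV[R]_3) :
  det3 u v w *: c = (u *m c) ord0 ord0 *: (cross v w)^T
                    + (v *m c) ord0 ord0 *: (cross w u)^T
                    + (w *m c) ord0 ord0 *: (cross u v)^T.
Proof. by apply/colP; elim/ord3P; rewrite !mxE !big_ord3 /= /det3; ring. Qed.

Lemma det3_relation x v1 v2 v3 :
  det3 x v2 v3 *: v1 - det3 x v1 v3 *: v2 + det3 x v1 v2 *: v3 = det3 v1 v2 v3 *: x.
Proof. by apply/rowP; elim/ord3P; rewrite !mxE /det3; ring. Qed.

Lemma det3Z c u v w : det3 (c *: u) (c *: v) (c *: w) = c ^+ 3 * det3 u v w.
Proof. by rewrite /det3 !mxE; ring. Qed.

Definition minor2 C : R := C o0 o0 * C o1 o1 - C o0 o1 * C o1 o0.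

Definition kernel_vec C : 'rV[R]_3 :=
  \row_j [:: C o1 o0 * C o2 o1 - C o1 o1 * C o2 o0;
             C o2 o0 * C o0 o1 - C o2 o1 * C o0 o0; minor2 C]`_j.

Lemma minor2_scale_kernel C x :
  minor2 C *: x = x ord0 o2 *: kernel_vec C
    + (x *m C) ord0 o0 *: \row_j [:: C o1 o1; - C o0 o1; 0]`_j
    + (x *m C) ord0 o1 *: \row_j [:: - C o1 o0; C o0 o0; 0]`_j.
Proof. by apply/rowP; elim/ord3P; rewrite !mxE !big_ord3 /= /minor2; ring. Qed.

End Dimension3.

Lemma mulmx_commutator_eigen (R : comNzRingType) n (P Q : 'M[R]_n) (y : 'rV[R]_n)
    mu nu :
  y *m P = mu *: y -> y *m Q = nu *: y -> y *m (P *m Q - Q *m P) = 0.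
Proof.
move=> hP hQ; rewrite mulmxBr !mulmxA hP hQ -!scalemxAl hP hQ !scalerA mulrC.
exact: subrr.
Qed.

Section Dimension3Field.
Variable F : fieldType.
Implicit Types (u v w x y z : 'rV[F]_3) (C : 'M[F]_3).

Lemma not_row_full_kernel m n (M : 'M[F]_(m, n)) :
  ~~ row_full M -> exists2 c : 'cV_n, c != 0 & M *m c = 0.
Proof.
move=> hM; set K := kermx M^T.
have nzK : K != 0 by rewrite kermx_eq0 /row_free mxrank_tr.
have [i nz_i] : exists i, row i K != 0.
  case: (pickP (fun i => row i K != 0)) => [i hi | h0]; first by exists i.
  by case/eqP: nzK; apply/row_matrixP => i; rewrite row0; apply/eqP/negbFE/h0.
exists (row i K)^T; first by rewrite trmx_eq0.
by rewrite -[M]trmxK -trmx_mul -row_mul mulmx_ker row0 trmx0.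
Qed.

Lemma det3_eq0_of_kernel u v w (c : 'cV[F]_3) :
  c != 0 -> u *m c = 0 -> v *m c = 0 -> w *m c = 0 -> det3 u v w = 0.
Proof.
move=> nz_c hu hv hw; have := det3_scale_col u v w c.
rewrite hu hv hw !mxE !scale0r !addr0 => /eqP.
by rewrite scalemx_eq0 (negbTE nz_c) orbF => /eqP.
Qed.

Lemma sub_kernel_vec C z : minor2 C != 0 -> z *m C = 0 -> (z <= kernel_vec C)%MS.
Proof.
move=> nz_g hz; apply/sub_rVP; exists (z ord0 o2 / minor2 C).
apply: (scalerI nz_g); rewrite minor2_scale_kernel hz !mxE !scale0r !addr0.
by rewrite scalerA mulrCA divff // mulr1.
Qed.

Lemma left_kernel_line C x y :
  minor2 C != 0 -> x *m C = 0 -> y *m C = 0 -> x != 0 -> (y <= x)%MS.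
Proof.
move=> nz_g hx hy nz_x.
have sxk := sub_kernel_vec nz_g hx.
apply: submx_trans (sub_kernel_vec nz_g hy) _.
rewrite -(geq_leqif (mxrank_leqif_sup sxk)) (rank_rV x) nz_x.
exact: rank_leq_row.
Qed.

End Dimension3Field.

Section CubicMinors.
Variable R : comNzRingType.
Implicit Types (x : 'rV[R]_3) (A B C : 'M[R]_3) (S : 'I_4 -> 'M[R]_3).

(* The monomials and the triples below are ordered so that [minors_mx S0] is
   lower triangular. *)
Definition cubic_monomial x (m : 'I_10) : R :=
  let: (a, b, c) :=
    match val m with
    | 0 => (o0, o0, o1) | 1 => (o0, o2, o2) | 2 => (o0, o1, o1) | 3 => (o1, o2, o2)
    | 4 => (o0, o0, o0) | 5 => (o0, o1, o2) | 6 => (o2, o2, o2) | 7 => (o1, o1, o1)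
    | 8 => (o0, o0, o2) | _ => (o1, o1, o2) end in
  x ord0 a * x ord0 b * x ord0 c.

Definition cubic_coef A B C (m : 'I_10) : R :=
  let T p j k := det3 (row p A) (row j B) (row k C) in
  match val m with
  | 0 => T o0 o0 o1 + T o0 o1 o0 + T o1 o0 o0
  | 1 => T o0 o2 o2 + T o2 o0 o2 + T o2 o2 o0
  | 2 => T o0 o1 o1 + T o1 o0 o1 + T o1 o1 o0
  | 3 => T o1 o2 o2 + T o2 o1 o2 + T o2 o2 o1
  | 4 => T o0 o0 o0
  | 5 => T o0 o1 o2 + T o0 o2 o1 + T o1 o0 o2 + T o1 o2 o0 + T o2 o0 o1 + T o2 o1 o0
  | 6 => T o2 o2 o2
  | 7 => T o1 o1 o1
  | 8 => T o0 o0 o2 + T o0 o2 o0 + T o2 o0 o0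
  | _ => T o1 o1 o2 + T o1 o2 o1 + T o2 o1 o1
  end.

Lemma det3_mulmx_cubic x A B C :
  det3 (x *m A) (x *m B) (x *m C) =
  \sum_(m < 10) cubic_coef A B C m * cubic_monomial x m.
Proof.
by rewrite /det3 !mulmx_rV3 big_ord10 /cubic_coef /cubic_monomial /det3 /= !mxE; ring.
Qed.

Definition frame S (n : nat) : 'M[R]_3 :=
  match n with 0 => 1%:M | 1 => S p0 | 2 => S p1 | 3 => S p2 | _ => S p3 end.

Definition triple (k : 'I_10) : nat * nat * nat :=
  match val k with
  | 0 => (1, 2, 4) | 1 => (0, 1, 3) | 2 => (1, 3, 4) | 3 => (0, 2, 4)
  | 4 => (0, 1, 2) | 5 => (0, 1, 4) | 6 => (0, 2, 3) | 7 => (0, 3, 4)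
  | 8 => (1, 2, 3) | _ => (2, 3, 4) end.

Definition frame_minors S x : 'cV[R]_10 :=
  \col_k let: (a, b, c) := triple k in
         det3 (x *m frame S a) (x *m frame S b) (x *m frame S c).

Definition minors_mx S : 'M[R]_10 :=
  \matrix_(k, m) let: (a, b, c) := triple k in
                 cubic_coef (frame S a) (frame S b) (frame S c) m.

Definition cubic_monomials x : 'cV[R]_10 := \col_m cubic_monomial x m.

Lemma frame_minorsE S x : frame_minors S x = minors_mx S *m cubic_monomials x.
Proof.
apply/colP => k; rewrite !mxE; under [RHS]eq_bigr do rewrite !mxE.
by case: (triple k) => [[a b] c]; rewrite det3_mulmx_cubic.
Qed.

End CubicMinors.

Lemma cube_eq0 (F : idomainType) (a : F) : a * a * a = 0 -> a = 0.
Proof. by move/eqP; rewrite !mulf_eq0 !orbb => /eqP. Qed.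

Lemma generates_of_minors_mx (F : fieldType) (S : 'I_4 -> 'M[F]_3) :
  \det (minors_mx S) != 0 -> generates S.
Proof.
move=> nz_det x nz_x; apply/negPn/negP => /not_row_full_kernel [c nz_c].
rewrite mul_col_mx => /eqP; rewrite col_mx_eq0 => /andP [/eqP hsec /eqP hx].
have hS i : x *m S i *m c = 0.
  by have := congr1 (row i) hsec; rewrite row_mul row0 rowK.
have hframe n : x *m frame S n *m c = 0.
  by case: n => [|[|[|[|n]]]]; rewrite /= ?mulmx1.
have hmin : frame_minors S x = 0.
  apply/colP => k; rewrite !mxE; case: (triple k) => [[a b] d].
  exact: det3_eq0_of_kernel nz_c (hframe a) (hframe b) (hframe d).
have /colP hmon : cubic_monomials x = 0.
  have unitC : minors_mx S \in unitmx by rewrite unitmxE unitfE.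
  by rewrite -(mulKmx unitC (cubic_monomials x)) -frame_minorsE hmin mulmx0.
move/eqP: nz_x; apply; apply/rowP; elim/ord3P; rewrite mxE; apply: cube_eq0.
- by have := hmon (O10 4); rewrite !mxE.
- by have := hmon (O10 7); rewrite !mxE.
- by have := hmon (O10 6); rewrite !mxE.
Qed.

Definition entry_pos (l : 'I_4) : 'I_3 * 'I_3 :=
  match val l with 0 => (o0, o1) | 1 => (o0, o2) | 2 => (o1, o2) | _ => (o1, o0) end.

Definition entry_minor_mx (R : nzRingType) (S : 'I_4 -> 'M[R]_3) : 'M[R]_4 :=
  colsub (fun l => mxvec_index (entry_pos l).1 (entry_pos l).2)
         (\matrix_(i < 4) mxvec (S i)).

Lemma lin_indep_of_entry_minor (F : fieldType) (S : 'I_4 -> 'M[F]_3) :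
  \det (entry_minor_mx S) != 0 -> lin_indep S.
Proof.
move=> nz_det; rewrite /lin_indep /row_free eqn_leq rank_leq_row /=.
have /eqP {1}<- : row_free (entry_minor_mx S).
  by rewrite row_free_unit unitmxE unitfE.
by rewrite /entry_minor_mx -[X in colsub _ X]mulmx1 -mulmx_colsub mxrankM_maxl.
Qed.

Section SeparatingPolynomial.
Variable R : comNzRingType.
Implicit Types (S : 'I_4 -> 'M[R]_3) (x z : 'rV[R]_3).

Definition relation_row S x (i j k : 'I_4) : 'rV[R]_4 :=
  det3 x (x *m S j) (x *m S k) *: delta_mx 0 i
  - det3 x (x *m S i) (x *m S k) *: delta_mx 0 j
  + det3 x (x *m S i) (x *m S j) *: delta_mx 0 k.

Definition relation_mx S x (i j k : 'I_4) : 'M[R]_3 :=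
  det3 x (x *m S j) (x *m S k) *: S i
  - det3 x (x *m S i) (x *m S k) *: S j
  + det3 x (x *m S i) (x *m S j) *: S k.

Lemma relation_row_secmx S x i j k z :
  relation_row S x i j k *m secmx S z = z *m relation_mx S x i j k.
Proof.
by rewrite !mulmxDl !mulNmx -!scalemxAl -!rowE !rowK !mulmxDr !mulmxN -!scalemxAr.
Qed.

Lemma relation_mx_eigen S x i j k :
  x *m relation_mx S x i j k = det3 (x *m S i) (x *m S j) (x *m S k) *: x.
Proof. by rewrite !mulmxDr !mulmxN -!scalemxAr det3_relation. Qed.

Lemma relation_mxZ S x i j k c :
  relation_mx S (c *: x) i j k = c ^+ 3 *: relation_mx S x i j k.
Proof. by rewrite /relation_mx -!scalemxAl !det3Z !scalerDr !scalerN !scalerA. Qed.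

Definition sep_mx S x : 'M[R]_3 :=
  let P := relation_mx S x p0 p1 p2 in let Q := relation_mx S x p0 p1 p3 in
  P *m Q - Q *m P.

Definition sep_poly S x : R := minor2 (sep_mx S x).

Lemma sep_polyZ S x c : sep_poly S (c *: x) = c ^+ 12 * sep_poly S x.
Proof.
rewrite /sep_poly; have -> : sep_mx S (c *: x) = (c ^+ 3 * c ^+ 3) *: sep_mx S x.
  by rewrite /sep_mx !relation_mxZ -!scalemxAl -!scalemxAr !scalerA scalerBr.
by rewrite /minor2 !mxE; ring.
Qed.

End SeparatingPolynomial.

Lemma phi_eq_relation_eigen (F : fieldType) (S : 'I_4 -> 'M[F]_3) x y i j k :
  phi_eq S x y -> exists mu, y *m relation_mx S x i j k = mu *: y.
Proof.
move=> hxy; have : (relation_row S x i j k *m secmx S x <= x)%MS.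
  by rewrite relation_row_secmx relation_mx_eigen scalemx_sub.
by rewrite hxy relation_row_secmx => /sub_rVP.
Qed.

Lemma fiber_sub_of_sep_poly (F : fieldType) (S : 'I_4 -> 'M[F]_3) x y :
  sep_poly S x != 0 -> x != 0 -> phi_eq S x y -> (y <= x)%MS.
Proof.
move=> nz_sep nz_x hxy; apply: (left_kernel_line nz_sep) nz_x.
- exact: mulmx_commutator_eigen (relation_mx_eigen _ _ _ _ _)
                                (relation_mx_eigen _ _ _ _ _).
- have [mu hmu] := phi_eq_relation_eigen p0 p1 p2 hxy.
  have [nu hnu] := phi_eq_relation_eigen p0 p1 p3 hxy.
  exact: mulmx_commutator_eigen hmu hnu.
Qed.

Section Polynomiality.
Variables (T I : Type) (R : comNzRingType) (env : T -> I -> R).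

Lemma polyfun_det3 (u v w : T -> 'rV[R]_3) :
  polyfun_mx env u -> polyfun_mx env v -> polyfun_mx env w ->
  polyfun env (fun t => det3 (u t) (v t) (w t)).
Proof.
move=> hu hv hw; rewrite /det3.
by repeat first [ apply: polyfun_add | apply: polyfun_opp | apply: polyfun_mul
                | apply: hu | apply: hv | apply: hw ].
Qed.

Lemma polyfun_sep_poly (Sf : T -> 'I_4 -> 'M[R]_3) (xf : T -> 'rV[R]_3) :
  (forall i, polyfun_mx env (fun t => Sf t i)) -> polyfun_mx env xf ->
  polyfun env (fun t => sep_poly (Sf t) (xf t)).
Proof.
move=> hS hx.
have hxS i : polyfun_mx env (fun t => xf t *m Sf t i) by apply: polyfun_mx_mul.
have hrel i j k : polyfun_mx env (fun t => relation_mx (Sf t) (xf t) i j k).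
  by apply: polyfun_mx_add; first apply: polyfun_mx_sub;
    apply: polyfun_mx_scale => //; apply: polyfun_det3.
have hsep : polyfun_mx env (fun t => sep_mx (Sf t) (xf t)).
  by apply: polyfun_mx_sub; apply: polyfun_mx_mul.
by apply: polyfun_sub; apply: polyfun_mul; apply: hsep.
Qed.

End Polynomiality.

Lemma generically_injective_of_sep_poly (F : fieldType) (S : 'I_4 -> 'M[F]_3) x0 :
  sep_poly S x0 != 0 -> generically_injective S.
Proof.
move=> nz_sep.
have [p hp] : polyfun (@rcoords F) (sep_poly S).
  apply: (polyfun_sep_poly (Sf := fun=> S)) => [i|i j].
    exact: polyfun_mx_const.
  by rewrite (ord1 i); apply: polyfun_var.
exists (fun x => x != 0 /\ sep_poly S x != 0); split.
- exists [:: p]; split; last by move=> x; rewrite /= hp orbF.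
  by case=> // _; exists 12%N => c x; rewrite /= !hp sep_polyZ.
- exists x0; split => //; apply: contraNneq nz_sep => ->.
  by rewrite -(scale0r 0) sep_polyZ expr0n mul0r.
- by move=> x y [nz_x nz_sepx] _; apply: fiber_sub_of_sep_poly.
Qed.

Definition nondeg_poly (R : comNzRingType) (e : 'rV[R]_3) (S : 'I_4 -> 'M[R]_3) : R :=
  \det (minors_mx S) * \det (entry_minor_mx S) * sep_poly S e.

Lemma polyfun_nondeg_poly (R : comNzRingType) (e : 'rV[R]_3) :
  polyfun (@coords4 R) (nondeg_poly e).
Proof.
have hS i : polyfun_mx (@coords4 R) (fun S => S i).
  by move=> j k; exact: polyfun_var (i, j, k).
have hframe n : polyfun_mx (@coords4 R) (fun S => frame S n).
  by case: n => [|[|[|[|n]]]] /=; [apply: polyfun_mx_const | apply: hS ..].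
apply: polyfun_mul; first apply: polyfun_mul.
- apply: polyfun_det => k m.
  apply: (eq_polyfun (G := fun S => let: (a, b, c) := triple k in
    cubic_coef (frame S a) (frame S b) (frame S c) m)); first by move=> S; rewrite mxE.
  case: (triple k) => [[a b] c]; rewrite /cubic_coef.
  case: m => [[|[|[|[|[|[|[|[|[|[|//]]]]]]]]]] _] /=;
  by repeat first [ apply: polyfun_det3 | apply: polyfun_add | apply: polyfun_mx_row
                  | apply: hframe ].
- apply: polyfun_det => i l.
  apply: (eq_polyfun (G := fun S : 'I_4 -> 'M[R]_3 =>
                                S i (entry_pos l).1 (entry_pos l).2)).
    by move=> S; rewrite !mxE mxvecE.
  exact: hS.
- by apply: (polyfun_sep_poly (xf := fun=> e)) => //; apply: polyfun_mx_const.
Qed.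

Section Witness.
Variable R : comNzRingType.

Definition witness_entry (i j k : nat) : R :=
  match i, j, k with
  | 1, 0, 2 | 1, 2, 1 | 2, 1, 2 | 3, 1, 0 => 1
  | 0, 0, 1 | 2, 2, 0 => -1
  | _, _, _ => 0 end.

Definition S0 : 'I_4 -> 'M[R]_3 := fun i => \matrix_(j, k) witness_entry i j k.

Definition e0 : 'rV[R]_3 := \row_j [:: -1; 0; 1]`_j.

Lemma row_S0 i p k : row p (S0 i) ord0 k = witness_entry i p k.
Proof. by rewrite !mxE. Qed.

Lemma V4_S0 : V4 S0.
Proof. by elim/ord4P; rewrite /mxtrace big_ord3 !mxE /= !addr0. Qed.

Lemma det_minors_mx_S0 : \det (minors_mx S0) = -1.
Proof.
have trig : is_trig_mx (minors_mx S0).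
  apply/is_trig_mxP => i j; elim/ord10P: i; elim/ord10P: j => //= _;
  by rewrite mxE /= /cubic_coef /det3 /= !(row_S0, mxE) /=; ring.
rewrite det_trig // big_ord10 !mxE /= /cubic_coef /det3 /=.
by rewrite !(row_S0, mxE) /=; ring.
Qed.

Lemma det_entry_minor_mx_S0 : \det (entry_minor_mx S0) = -1.
Proof.
have trig : is_trig_mx (entry_minor_mx S0).
  apply/is_trig_mxP => i j; elim/ord4P: i; elim/ord4P: j => //= _;
  by rewrite !mxE mxvecE !mxE.
by rewrite det_trig // big_ord4 !mxE !mxvecE !mxE /=; ring.
Qed.

Lemma relation_mx_S0_012 : relation_mx S0 e0 p0 p1 p2 = S0 p0 - S0 p1 + S0 p2.
Proof.
have [d12 d02 d01] : [/\ det3 e0 (e0 *m S0 p1) (e0 *m S0 p2) = 1,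
                         det3 e0 (e0 *m S0 p0) (e0 *m S0 p2) = 1 &
                         det3 e0 (e0 *m S0 p0) (e0 *m S0 p1) = 1].
  by rewrite /det3 !mulmx_rV3 !mxE /=; split; ring.
by rewrite /relation_mx d12 d02 d01 !scale1r.
Qed.

Lemma relation_mx_S0_013 : relation_mx S0 e0 p0 p1 p3 = S0 p3.
Proof.
have [d13 d03 d01] : [/\ det3 e0 (e0 *m S0 p1) (e0 *m S0 p3) = 0,
                         det3 e0 (e0 *m S0 p0) (e0 *m S0 p3) = 0 &
                         det3 e0 (e0 *m S0 p0) (e0 *m S0 p1) = 1].
  by rewrite /det3 !mulmx_rV3 !mxE /=; split; ring.
by rewrite /relation_mx d13 d03 d01 !scale0r scale1r subr0 add0r.
Qed.

Lemma sep_poly_S0 : sep_poly S0 e0 = -1.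
Proof.
rewrite /sep_poly /sep_mx relation_mx_S0_012 relation_mx_S0_013 /minor2.
by rewrite !mxE !big_ord3 !mxE /=; ring.
Qed.

End Witness.

Theorem theorem1 (R : numClosedFieldType) :
  exists U : ('I_4 -> 'M[R]_3) -> Prop,
    [/\ zariski_open_V4 U,
        (forall S, U S -> admissible S),
        (exists S, U S) &
        (forall S, U S -> generically_injective S)].
Proof.
exists (fun S => V4 S /\ nondeg_poly (e0 R) S != 0); split.
- split=> [S []//|]; have [p hp] := polyfun_nondeg_poly (e0 R).
  by exists [:: p] => S hV; rewrite /= hp orbF; split=> [[]|].
- move=> S [hV]; rewrite /nondeg_poly !mulf_eq0 !negb_or => /andP [/andP [hC hM] _].
  by split; [| exact: lin_indep_of_entry_minor | exact: generates_of_minors_mx].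
- exists (S0 R); split; first exact: V4_S0.
  rewrite /nondeg_poly det_minors_mx_S0 det_entry_minor_mx_S0 sep_poly_S0.
  by rewrite !mulf_neq0 // oppr_eq0 oner_eq0.
- move=> S [_]; rewrite /nondeg_poly !mulf_eq0 !negb_or => /andP [_].
  exact: generically_injective_of_sep_poly.
Qed.
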